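(* Assume the Margin assumption holds and that $\|\cdot\|$ and $\|\cdot\|_*$ are strictly convex. Let $(y_t,b_t)$ and $d_t$, $t\ge1$, be generated by the SMM algorithm (with the initialization terminating). Then for all $t\ge1$, $$y_*^\top v(y_t)\ \ge\ \|y_*\|_*\,\frac{d_*}{d_t}\ >0.$$
   Context: Setting: $\mathcal{A}\subseteq\mathbb{R}^d$, labels $\ell(A)\in\{\pm1\}$, $\mathcal{A}^\pm=\{A\in\mathcal{A}:\ell(A)=\pm1\}$; $\operatorname{sign}(0)=+1$; norm $\|\cdot\|$ with dual $\|y\|_*=\max_{\|w\|\le1}y^\top w$; constant $c>0$; strict convexity of a norm $N$: $N(\beta w+(1-\beta)z)<\beta N(w)+(1-\beta)N(z)$ for $\beta\in(0,1)$ and $w,z$ non-collinear; under it, for $y\neq0$, $v(y)$ is the unique maximizer of $y^\top w$ over $\|w\|\le1$, and $v(0)=0$. Predicted label $\hat\ell(x,y,b)=\operatorname{sign}(y^\top x+b-2\|y\|_*/c)$. Response: for $y\ne0$, $r(A,y,b)=A+(\tfrac2c-\tfrac{y^\top A+b}{\|y\|_*})v(y)$ if $0\le\tfrac{y^\top A+b}{\|y\|_*}<\tfrac2c$, else $A$. Proxy: for $y\ne0$, $s(A,y,b)=A-\tfrac{y^\top A+b}{\|y\|_*}v(y)$ if $0\le\tfrac{y^\top A+b}{\|y\|_*}<\tfrac2c$ and $\ell(A)=-1$; $=A+(\tfrac2c-\tfrac{y^\top A+b}{\|y\|_*})v(y)$ if that range condition holds and $\ell(A)=+1$; $=A$ otherwise;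 $r(A,0,b)=s(A,0,b)=A$. Margin function $h(y,b;\widetilde{\mathcal{A}}^+,\widetilde{\mathcal{A}}^-)=\min\{\min_{x\in\widetilde{\mathcal{A}}^+}(y^\top x+b),\min_{x\in\widetilde{\mathcal{A}}^-}(-y^\top x-b)\}$. Margin assumption: $d_*:=\max_{y\ne0,b\in\mathbb{R}}\min_{A\in\mathcal{A}}\ell(A)\frac{y^\top A+b}{\|y\|_*}$ is attained at some $(y_*,b_* )$ with $y_*\neq0$, and $d_*>0$. SMM algorithm: agents with true features in $\mathcal{A}$ arrive sequentially. Initialization: start with $\widetilde{\mathcal{A}}_0^\pm=\emptyset$ and $(y,b)=(0,1)$; each arriving agent (responding with its true $A$ since $y=0$) has its label revealed and $A$ is added to $\widetilde{\mathcal{A}}_0^+$ or $\widetilde{\mathcal{A}}_0^-$ by label; then $b:=-1$ if $\widetilde{\mathcal{A}}_0^+=\emptyset$, else $b:=+1$ if $\widetilde{\mathcal{A}}_0^-=\emptyset$; stop once both are nonempty. Let $(y_1,b_1)$ be an optimal solution, and $d_1$ the optimal value, of $\max\{h(y,b;\widetilde{\mathcal{A}}_0^+,\widetilde{\mathcal{A}}_0^-):\|y\|_*\le1,b\in\mathbb{R}\}$. For $t=1,2,\dots$: agent $A_t\in\mathcal{A}$ is shown $(y_t,b_t)$, responds $r(A_t,y_t,b_t)$, is predicted $\hat\ell(r(A_t,y_t,b_t),y_t,b_t)$; then $\ell(A_t)$ is revealed, $s(A_t,y_t,b_t)$ is added to $\widetilde{\mathcal{A}}_t^+:=\widetilde{\mathcal{A}}_{t-1}^+\cup\{s(A_t,y_t,b_t)\}$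 if $\ell(A_t)=+1$ (else to $\widetilde{\mathcal{A}}_t^-$, the other set being unchanged), and $(y_{t+1},b_{t+1})$ is an optimal solution, with optimal value $d_{t+1}$, of $\max\{h(y,b;\widetilde{\mathcal{A}}_t^+,\widetilde{\mathcal{A}}_t^-):\|y\|_*\le1,b\in\mathbb{R}\}$. *)

From HB Require Import structures.
From mathcomp Require Import all_boot all_order all_algebra.
From mathcomp Require Import classical_sets boolp reals ereal constructive_ereal.
Set Implicit Arguments. Unset Strict Implicit. Unset Printing Implicit Defensive.
Import Order.TTheory GRing.Theory Num.Theory.
Local Open Scope classical_set_scope.
Local Open Scope ring_scope.

Section SMM.
Variables (R : realType) (d : nat).
Notation vec := 'rV[R]_d.

Definition dot (y x : vec) : R := \sum_(i < d) y 0 i * x 0 i.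

Definition is_norm (N : vec -> R) : Prop :=
  [/\ forall x, N x = 0 -> x = 0,
      forall (a : R) x, N (a *: x) = `|a| * N x &
      forall x z, N (x + z) <= N x + N z].

Definition is_dual_norm (N D : vec -> R) : Prop :=
  forall y, (forall w, N w <= 1 -> dot y w <= D y) /\
            (exists w, N w <= 1 /\ dot y w = D y).

Definition collinear (w z : vec) : Prop :=
  exists a : R, w = a *: z \/ z = a *: w.

Definition strictly_convex (N : vec -> R) : Prop :=
  forall (beta : R) (w z : vec), 0 < beta < 1 -> ~ collinear w z ->
    N (beta *: w + (1 - beta) *: z) < beta * N w + (1 - beta) * N z.

(* v(y): the (unique, under strict convexity of N) maximizer of y^T w over
   N w <= 1 for y <> 0, and v(0) = 0. *)
Definition vmax (N D : vec -> R) (y : vec) : vec :=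
  if y == 0 then 0 else xget 0 [set w | N w <= 1 /\ dot y w = D y].

Definition lsign (l : bool) : R := if l then 1 else -1.

Definition resp (N D : vec -> R) (c : R) (A y : vec) (b : R) : vec :=
  if y == 0 then A else
  let q := (dot y A + b) / D y in
  if (0 <= q) && (q < 2 / c) then A + (2 / c - q) *: vmax N D y else A.

Definition proxy (N D : vec -> R) (c : R) (lab : vec -> bool)
    (A y : vec) (b : R) : vec :=
  if y == 0 then A else
  let q := (dot y A + b) / D y in
  if (0 <= q) && (q < 2 / c) then
    (if lab A then A + (2 / c - q) *: vmax N D y else A - q *: vmax N D y)
  else A.

(* margin function h(y,b; S+, S-) (min of infima; sets are finite and
   nonempty in the algorithm, so these are minima) *)
Definition hmargin (Sp Sm : set vec) (y : vec) (b : R) : \bar R :=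
  Order.min (ereal_inf [set ((dot y x + b)%:E) | x in Sp])
            (ereal_inf [set ((- dot y x - b)%:E) | x in Sm]).

Definition optimal_sol (D : vec -> R) (Sp Sm : set vec) (y : vec) (b dv : R)
  : Prop :=
  [/\ D y <= 1, hmargin Sp Sm y b = dv%:E &
      forall y' b', D y' <= 1 -> (hmargin Sp Sm y' b' <= dv%:E)%E].

Definition smargin (D : vec -> R) (lab : vec -> bool) (A y : vec) (b : R) : R :=
  lsign (lab A) * (dot y A + b) / D y.

Definition set_margin (D : vec -> R) (lab : vec -> bool) (calA : set vec)
    (y : vec) (b : R) : \bar R :=
  ereal_inf [set (smargin D lab A y b)%:E | A in calA].

Definition margin_assumption (D : vec -> R) (lab : vec -> bool) (calA : set vec)
    (yst : vec) (bst dst : R) : Prop :=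
  [/\ yst != 0, set_margin D lab calA yst bst = dst%:E,
      (forall y b, y != 0 -> (set_margin D lab calA y b <= dst%:E)%E) &
      0 < dst].

(* Initialization phase: the agents' true features in arrival order; the phase
   stops as soon as both labels have been seen. *)
Definition init_ok (calA : set vec) (lab : vec -> bool) (s : seq vec) : Prop :=
  [/\ forall x, x \in s -> calA x,
      has lab s, has (fun x => ~~ lab x) s &
      ~~ (has lab (take (size s).-1 s) &&
          has (fun x => ~~ lab x) (take (size s).-1 s))].

Definition init_set (lab : vec -> bool) (s : seq vec) (pos : bool) : set vec :=
  [set x | x \in s /\ lab x = pos].

End SMM.

(** The key point is a Danskin-type estimate.  Let [(y, b)] be optimal with value [dd] for
    sets separated by [(yst, bst)] with margin [m].  Every point of the sets is separated by
    [(y + eps yst, b + eps bst)] with margin [dd + eps m], so optimality gives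
    [D (y + eps yst) >= 1 + eps m / dd].  Hence a maximizer [w] of [(y + eps yst)^T w] over the
    unit ball satisfies [yst^T w >= m / dd], while [y^T w] tends to [D y].  By compactness of the
    unit ball, a limit of such [w] is a maximizer for [y], which is [v(y)] by strict convexity.
    Along the algorithm, the margin assumption separates the initial sets and all proxies with
    margin [m = dst * D yst]: a proxy moves its point along [+v(y_t)] for label [+1] and along
    [-v(y_t)] for label [-1], and [yst^T v(y_t) >= 0] by the estimate itself. *)
From HB Require Import structures.
From mathcomp Require Import all_boot all_order all_algebra.
From mathcomp Require Import classical_sets boolp reals ereal constructive_ereal.
From mathcomp Require Import all_classical all_reals all_analysis.
From mathcomp Require Import lra.
Set Implicit Arguments. Unset Strict Implicit. Unset Printing Implicit Defensive.
Import Order.TTheory GRing.Theory Num.Theory.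
Import numFieldNormedType.Exports.
Local Open Scope classical_set_scope.
Local Open Scope ring_scope.

Section Dot.
Variables (R : realType) (d : nat).
Implicit Types (x y z : 'rV[R]_d) (a : R).

Lemma dotDr y x z : dot y (x + z) = dot y x + dot y z.
Proof. by rewrite /dot -big_split; apply: eq_bigr => i _; rewrite mxE mulrDr. Qed.

Lemma dotDl y x z : dot (x + z) y = dot x y + dot z y.
Proof. by rewrite /dot -big_split; apply: eq_bigr => i _; rewrite mxE mulrDl. Qed.

Lemma dotZr y x a : dot y (a *: x) = a * dot y x.
Proof. by rewrite /dot mulr_sumr; apply: eq_bigr => i _; rewrite mxE mulrCA. Qed.

Lemma dotZl y x a : dot (a *: x) y = a * dot x y.
Proof. by rewrite /dot mulr_sumr; apply: eq_bigr => i _; rewrite mxE mulrA. Qed.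

Lemma dotNr y x : dot y (- x) = - dot y x.
Proof. by rewrite -scaleN1r dotZr mulN1r. Qed.

Lemma dotNl y x : dot (- x) y = - dot x y.
Proof. by rewrite -scaleN1r dotZl mulN1r. Qed.

Lemma dot0r y : dot y 0 = 0.
Proof. by rewrite -(scale0r 0) dotZr mul0r. Qed.

Lemma dot0l y : dot 0 y = 0.
Proof. by rewrite -(scale0r 0) dotZl mul0r. Qed.

Lemma dot_delta i x : dot 'e_i x = x 0 i.
Proof.
rewrite /dot (bigD1 i) //= big1 ?addr0; first by rewrite mxE !eqxx mul1r.
by move=> j ji; rewrite mxE (negbTE ji) andbF mul0r.
Qed.

Lemma dotxx_gt0 y : y != 0 -> 0 < dot y y.
Proof.
move=> y0; have sq_ge0 i : 0 <= y 0 i * y 0 i by rewrite -expr2 sqr_ge0.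
rewrite lt_neqAle sumr_ge0 ?andbT // eq_sym psumr_eq0 //.
apply: contra y0 => /allP y_0; apply/eqP/rowP => i.
by have := y_0 i (mem_index_enum i); rewrite -expr2 sqrf_eq0 mxE => /eqP.
Qed.

Lemma continuous_coord_lipschitz (f : 'rV[R]_d -> R) (k : 'I_d -> R) :
  (forall i, 0 <= k i) ->
  (forall x z, f x - f z <= \sum_i `|x 0 i - z 0 i| * k i) -> continuous f.
Proof.
move=> k0 fk x B /nbhs_ballP [e e0 eB]; apply/nbhs_ballP.
pose C := \sum_i k i + 1.
have C0 : 0 < C by rewrite ltr_wpDl // sumr_ge0.
exists (e / C); first by rewrite /= divr_gt0.
move=> z [_ xz]; apply: eB.
have sum_lt : \sum_i `|x 0 i - z 0 i| * k i < e.
  apply: (le_lt_trans (y := \sum_i e / C * k i)).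
    apply: ler_sum => i _; apply: ler_wpM2r => //; apply: ltW.
    by have := xz 0 i; rewrite -ball_normE.
  by rewrite -mulr_sumr mulrAC ltr_pdivrMr // ltr_pM2l // ltrDl.
rewrite -ball_normE /ball_ /= ltr_norml; apply/andP; split.
  rewrite ltrNl opprB; apply: le_lt_trans (fk z x) _.
  by under eq_bigr do rewrite distrC.
exact: le_lt_trans (fk x z) _.
Qed.

Lemma dot_continuous z : continuous (dot z).
Proof.
apply: (@continuous_coord_lipschitz _ (fun i => `|z 0 i|)) => // x w.
rewrite -dotNr -dotDr /dot; apply: ler_sum => i _.
by rewrite !mxE mulrC -normrM ler_norm.
Qed.

End Dot.

Section Margin.
Variables (R : realType) (d : nat).
Implicit Types (u x : 'rV[R]_d) (Sp Sm : set 'rV[R]_d).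

Definition signed_margin u (beta : R) (l : bool) x : R :=
  if l then dot u x + beta else - dot u x - beta.

Definition separates u (beta r : R) Sp Sm : Prop :=
  (forall x, Sp x -> r <= signed_margin u beta true x) /\
  (forall x, Sm x -> r <= signed_margin u beta false x).

Lemma signed_marginD u1 u2 beta1 beta2 l x :
  signed_margin (u1 + u2) (beta1 + beta2) l x =
  signed_margin u1 beta1 l x + signed_margin u2 beta2 l x.
Proof. by case: l; rewrite /signed_margin dotDl; lra. Qed.

Lemma signed_marginZ a u beta l x :
  signed_margin (a *: u) (a * beta) l x = a * signed_margin u beta l x.
Proof. by case: l; rewrite /signed_margin dotZl; lra. Qed.

Lemma separatesD u1 u2 beta1 beta2 r1 r2 Sp Sm :
  separates u1 beta1 r1 Sp Sm -> separates u2 beta2 r2 Sp Sm ->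
  separates (u1 + u2) (beta1 + beta2) (r1 + r2) Sp Sm.
Proof.
by move=> [p1 m1] [p2 m2]; split=> x Sx; rewrite signed_marginD lerD ?p1 ?p2 ?m1 ?m2.
Qed.

Lemma separatesZ a u beta r Sp Sm : 0 <= a ->
  separates u beta r Sp Sm -> separates (a *: u) (a * beta) (a * r) Sp Sm.
Proof.
by move=> a0 [p m]; split=> x Sx; rewrite signed_marginZ ler_wpM2l ?p ?m.
Qed.

Lemma separates_neq0 u beta r Sp Sm : 0 < r -> Sp !=set0 -> Sm !=set0 ->
  separates u beta r Sp Sm -> u != 0.
Proof.
move=> r0 [xp Sxp] [xm Sxm] [p m]; apply/eqP => u0.
by have := p _ Sxp; have := m _ Sxm; rewrite u0 /signed_margin !dot0l; lra.
Qed.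

Lemma separates_add u beta r Sp Sm (l : bool) x :
  separates u beta r Sp Sm -> r <= signed_margin u beta l x ->
  separates u beta r (if l then Sp `|` [set x] else Sp) (if l then Sm else Sm `|` [set x]).
Proof.
by case: l => -[p m] rx; split=> z //=;
  [case=> [/p|->] | exact: m | exact: p | case=> [/m|->]].
Qed.

Lemma hmargin_ge Sp Sm u beta r :
  separates u beta r Sp Sm -> (r%:E <= hmargin Sp Sm u beta)%E.
Proof.
move=> [p m]; rewrite /hmargin le_min; apply/andP; split;
  apply/ereal_infP => _ [x Sx <-]; rewrite lee_fin; [exact: p|exact: m].
Qed.

Lemma hmargin_separates Sp Sm u beta r :
  hmargin Sp Sm u beta = r%:E -> separates u beta r Sp Sm.
Proof.
move=> h; split=> x Sx; rewrite -lee_fin -h /hmargin ge_min; apply/orP.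
  by left; apply: ereal_inf_le; exists (signed_margin u beta true x)%:E => //; exists x.
by right; apply: ereal_inf_le; exists (signed_margin u beta false x)%:E => //; exists x.
Qed.

End Margin.

Section DualNorm.
Variables (R : realType) (d : nat) (N D : 'rV[R]_d -> R).
Hypotheses (N_norm : is_norm N) (ND_dual : is_dual_norm N D).
Implicit Types (w x y z : 'rV[R]_d).

Lemma norm0 : N 0 = 0.
Proof. by case: N_norm => _ NZ _; rewrite -(scale0r 0) NZ normr0 mul0r. Qed.

Lemma normN x : N (- x) = N x.
Proof. by case: N_norm => _ NZ _; rewrite -scaleN1r NZ normrN1 mul1r. Qed.

Lemma norm_ge0 x : 0 <= N x.
Proof.
case: N_norm => _ _ ND; have := ND x (- x).
by rewrite subrr norm0 normN -mulr2n -mulr_natr pmulr_lge0.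
Qed.

Lemma dot_le_dual y w : N w <= 1 -> dot y w <= D y.
Proof. by case: (ND_dual y) => + _; apply. Qed.

Lemma dual_ge0 y : 0 <= D y.
Proof. by rewrite -(dot0r y) dot_le_dual // norm0. Qed.

Lemma dot_le_dual_norm y w : dot y w <= D y * N w.
Proof.
have [Nw0|Nw_neq0] := eqVneq (N w) 0.
  by case: N_norm => N0 _ _; rewrite Nw0 (N0 _ Nw0) dot0r mulr0.
have Nw_gt0 : 0 < N w by rewrite lt_neqAle eq_sym Nw_neq0 norm_ge0.
have N_unit : N ((N w)^-1 *: w) <= 1.
  case: N_norm => _ NZ _.
  by rewrite NZ ger0_norm ?mulVf // invr_ge0 norm_ge0.
have := dot_le_dual y N_unit; rewrite dotZr.
by rewrite -ler_pdivlMl ?invr_gt0 // invrK mulrC.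
Qed.

Lemma dualZ a y : 0 <= a -> D (a *: y) = a * D y.
Proof.
move=> a0; apply/le_anti/andP; split.
  have [_ [w [Nw <-]]] := ND_dual (a *: y).
  by rewrite dotZl ler_wpM2l // dot_le_dual.
by have [_ [w [Nw <-]]] := ND_dual y; rewrite -dotZl dot_le_dual.
Qed.

Lemma dual_gt0 y : y != 0 -> 0 < D y.
Proof.
move=> y0; rewrite lt_neqAle dual_ge0 andbT eq_sym; apply: contraTneq (dotxx_gt0 y0).
by move=> Dy0; rewrite -leNgt (le_trans (dot_le_dual_norm y y)) // Dy0 mul0r.
Qed.

Lemma norm_continuous : continuous N.
Proof.
apply: (@continuous_coord_lipschitz _ _ N (fun i => N 'e_i)) => [i|x w].
  exact: norm_ge0.
case: N_norm => _ NZ ND; rewrite lerBlDr -{1}(subrK w x) (le_trans (ND _ _)) // lerD2r.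
rewrite {1}(row_sum_delta (x - w)); elim/big_ind2 : _ => [|u1 u2 v1 v2 h1 h2|i _].
- by rewrite norm0.
- by rewrite (le_trans (ND _ _)) // lerD.
- by rewrite NZ !mxE.
Qed.

Lemma unit_ball_compact : compact [set w | N w <= 1].
Proof.
have ball_closed : closed (N @^-1` [set r | r <= 1]).
  by apply: preimage_closed => [w _|]; [exact: norm_continuous | exact: closed_le].
apply: subclosed_compact ball_closed
  (@rV_compact _ _ (fun i => `[- D (- 'e_i), D 'e_i]%classic) _) _ => [i|w /= Nw i].
  exact: segment_compact.
by rewrite /= in_itv /= lerNl -!dot_delta -dotNl !dot_le_dual.
Qed.

Lemma dual_maximizer_perturb y z eps w : 0 <= eps -> N w <= 1 ->
  dot (y + eps *: z) w = D (y + eps *: z) -> D y - eps * (D z + D (- z)) <= dot y w.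
Proof.
move=> eps0 Nw opt_w; have [_ [v [Nv opt_v]]] := ND_dual y.
have : D y + eps * dot z v <= dot y w + eps * dot z w.
  by rewrite -!dotZl -opt_v -!dotDl opt_w dot_le_dual.
have : eps * - D (- z) <= eps * dot z v.
  by rewrite ler_wpM2l // lerNl -dotNl dot_le_dual.
have : eps * dot z w <= eps * D z by rewrite ler_wpM2l // dot_le_dual.
lra.
Qed.

Lemma optimal_value_ge Sp Sm y b dd u beta r : 0 < r -> Sp !=set0 -> Sm !=set0 ->
  separates u beta r Sp Sm -> optimal_sol D Sp Sm y b dd -> r <= dd * D u.
Proof.
move=> r0 neP neM sep [_ _ opt].
have Du_gt0 := dual_gt0 (separates_neq0 r0 neP neM sep).
have Du_inv_ge0 : 0 <= (D u)^-1 by rewrite invr_ge0 ltW.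
have normalized : D ((D u)^-1 *: u) <= 1 by rewrite dualZ // mulVf ?lt0r_neq0.
have := le_trans (hmargin_ge (separatesZ Du_inv_ge0 sep)) (opt _ _ normalized).
by rewrite lee_fin mulrC ler_pdivrMr.
Qed.

Section StrictlyConvex.
Hypothesis N_sconv : strictly_convex N.

Lemma dual_maximizer_unique y w1 w2 : y != 0 ->
  N w1 <= 1 -> dot y w1 = D y -> N w2 <= 1 -> dot y w2 = D y -> w1 = w2.
Proof.
move=> y0 N1 e1 N2 e2; have Dy_gt0 := dual_gt0 y0.
have scale1 a w w' : dot y w = D y -> dot y (a *: w) = D y -> a = 1.
  move=> e; rewrite dotZr e => /(congr1 (fun r => r / D y)).
  by rewrite mulfK ?divff ?lt0r_neq0.
have [[a [w12|w21]]|ncol] := pselect (collinear w1 w2).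
- by rewrite w12 (scale1 a w2 w1 e2) ?scale1r // -w12.
- by rewrite w21 (scale1 a w1 w2 e1) ?scale1r // -w21.
have half : 0 < (2^-1 : R) < 1 by rewrite invr_gt0 ltr0n invf_lt1 ?ltr0n // ltr1n.
pose m := 2^-1 *: w1 + (1 - 2^-1) *: w2.
have Nm_lt1 : N m < 1.
  by apply: (lt_le_trans (N_sconv half ncol)); lra.
have dot_m : dot y m = D y by rewrite dotDr !dotZr e1 e2 -mulrDl addrC subrK mul1r.
have := dot_le_dual_norm y m; rewrite dot_m.
by rewrite -[X in X <= _ -> _]mulr1 ler_pM2l // leNgt Nm_lt1.
Qed.

Lemma vmaxP y : y != 0 -> N (vmax N D y) <= 1 /\ dot y (vmax N D y) = D y.
Proof.
move=> y0; rewrite /vmax (negbTE y0).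
apply: (xgetPex 0 (P := [set w | N w <= 1 /\ dot y w = D y])).
by have [_ [w hw]] := ND_dual y; exists w.
Qed.

Lemma vmax_unique y w : y != 0 -> N w <= 1 -> dot y w = D y -> w = vmax N D y.
Proof.
by move=> y0 Nw opt_w; have [Nv opt_v] := vmaxP y0; apply: dual_maximizer_unique opt_v.
Qed.

(* By compactness, a limit of approximate maximizers is an exact one, hence [v(y)]. *)
Lemma dot_vmax_ge y z L : y != 0 ->
  (forall e, 0 < e -> exists w, [/\ N w <= 1, D y - e <= dot y w & L <= dot z w]) ->
  L <= dot z (vmax N D y).
Proof.
move=> y0 approx.
pose K := [set w | N w <= 1] `&` dot z @^-1` [set r | L <= r].
have K_compact : compact K.
  apply: compact_closedI unit_ball_compact _.
  by apply: preimage_closed => [w _|]; [exact: dot_continuous | exact: closed_ge].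
have img_compact : compact (dot y @` K).
  by apply: continuous_compact K_compact; apply: continuous_subspaceT; apply: dot_continuous.
have Dy_closure : closure (dot y @` K) (D y).
  move=> B /nbhs_ballP [e e0 eB].
  have [w [Nw yw zw]] := approx _ (divr_gt0 e0 (ltr0n _ 2)).
  exists (dot y w); split; first by exists w.
  apply: eB; rewrite -ball_normE /ball_ /= ger0_norm ?subr_ge0 ?dot_le_dual //.
  by rewrite ltrBlDr -ltrBlDl (lt_le_trans _ yw) // ltrD2l ltrN2 gtr_pMr // invf_lt1 ?ltr1n.
have [w [Nw zw] yw] := compact_closed (@Rhausdorff R) img_compact Dy_closure.
by rewrite -(vmax_unique y0 Nw yw).
Qed.

Lemma optimal_vmax_ge Sp Sm y b dd u beta r : 0 < r -> Sp !=set0 -> Sm !=set0 ->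
  separates u beta r Sp Sm -> optimal_sol D Sp Sm y b dd ->
  0 < dd /\ r / dd <= dot u (vmax N D y).
Proof.
move=> r0 neP neM sep opt.
have Du_gt0 := dual_gt0 (separates_neq0 r0 neP neM sep).
have dd_gt0 : 0 < dd.
  by rewrite -(pmulr_lgt0 _ Du_gt0) (lt_le_trans r0) // (optimal_value_ge r0 neP neM sep opt).
have [Dy_le1 /hmargin_separates sep_y _] := opt.
have y0 := separates_neq0 dd_gt0 neP neM sep_y.
split => //; apply: dot_vmax_ge y0 _ => e e0.
have C_gt0 : 0 < D u + D (- u) + 1 by rewrite ltr_wpDl // addr_ge0 ?dual_ge0.
pose eps := e / (D u + D (- u) + 1).
have eps_gt0 : 0 < eps by rewrite divr_gt0.
have [_ [w [Nw opt_w]]] := ND_dual (y + eps *: u).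
exists w; split => //.
  apply: le_trans (dual_maximizer_perturb (ltW eps_gt0) Nw opt_w).
  by rewrite lerD2l lerN2 mulrAC ler_pdivrMr // ler_pM2l // lerDl.
have := optimal_value_ge (addr_gt0 dd_gt0 (mulr_gt0 eps_gt0 r0)) neP neM
  (separatesD sep_y (separatesZ (ltW eps_gt0) sep)) opt.
rewrite -opt_w dotDl dotZl mulrDr => perturbed.
have := ler_wpM2l (ltW dd_gt0) (le_trans (dot_le_dual y Nw) Dy_le1).
rewrite mulr1 => yw_le.
by rewrite ler_pdivrMr // -(ler_pM2l eps_gt0) [dot u w * dd]mulrC mulrCA; lra.
Qed.

End StrictlyConvex.
End DualNorm.

Section Algorithm.
Variables (R : realType) (d : nat) (N D : 'rV[R]_d -> R) (lab : 'rV[R]_d -> bool).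

Lemma set_margin_signed (calA : set 'rV[R]_d) u beta r a : 0 < D u ->
  (r%:E <= set_margin D lab calA u beta)%E -> calA a ->
  r * D u <= signed_margin u beta (lab a) a.
Proof.
move=> Du_gt0 r_le calA_a.
have : (r%:E <= (smargin D lab a u beta)%:E)%E.
  by apply: le_trans r_le _; apply: ereal_inf_le; exists (smargin D lab a u beta)%:E => //; exists a.
rewrite lee_fin /smargin -ler_pdivlMr //.
by case: (lab a); rewrite /lsign /signed_margin ?mul1r ?mulN1r ?opprD.
Qed.

Lemma signed_margin_proxy_ge c u beta a y b : 0 <= dot u (vmax N D y) ->
  signed_margin u beta (lab a) a <= signed_margin u beta (lab a) (proxy N D c lab a y b).
Proof.
move=> v_ge0; rewrite /proxy; case: eqP => // _.
case: ifP => // /andP [q_ge0 q_lt]; case: (lab a); rewrite /signed_margin dotDr ?dotNr dotZr.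
  have coef_ge0 : 0 <= 2 / c - (dot y a + b) / D y by rewrite subr_ge0 ltW.
  by have := mulr_ge0 coef_ge0 v_ge0; lra.
by have := mulr_ge0 q_ge0 v_ge0; lra.
Qed.

Lemma init_separated (calA : set 'rV[R]_d) init yst bst dst : 0 < D yst ->
  set_margin D lab calA yst bst = dst%:E -> init_ok calA lab init ->
  [/\ init_set lab init true !=set0, init_set lab init false !=set0 &
      separates yst bst (dst * D yst) (init_set lab init true) (init_set lab init false)].
Proof.
move=> Dyst_gt0 margin_eq [init_in has_pos has_neg _].
have init_sep x : x \in init -> dst * D yst <= signed_margin yst bst (lab x) x.
  by move=> x_in; apply: set_margin_signed Dyst_gt0 _ (init_in x x_in); rewrite margin_eq.
split.
- by have /hasP [x x_in lx] := has_pos; exists x.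
- by have /hasP [x x_in /negbTE lx] := has_neg; exists x.
- by split=> x [x_in lx]; rewrite -lx init_sep.
Qed.

End Algorithm.

Theorem mainTheorem6 (R : realType) (d : nat)
    (N D : 'rV[R]_d -> R) (c : R)
    (calA : set 'rV[R]_d) (lab : 'rV[R]_d -> bool)
    (yst : 'rV[R]_d) (bst dst : R)
    (init : seq 'rV[R]_d) (A : nat -> 'rV[R]_d)
    (y : nat -> 'rV[R]_d) (b dd : nat -> R)
    (Sp Sm : nat -> set 'rV[R]_d) :
  is_norm N -> is_dual_norm N D -> 0 < c ->
  strictly_convex N -> strictly_convex D ->
  margin_assumption D lab calA yst bst dst ->
  init_ok calA lab init ->
  Sp 0%N = init_set lab init true -> Sm 0%N = init_set lab init false ->
  (forall t, (0 < t)%N -> calA (A t)) ->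
  (forall t : nat,
     Sp t.+1 = (if lab (A t.+1)
                then Sp t `|` [set proxy N D c lab (A t.+1) (y t.+1) (b t.+1)]
                else Sp t) /\
     Sm t.+1 = (if lab (A t.+1) then Sm t
                else Sm t `|` [set proxy N D c lab (A t.+1) (y t.+1) (b t.+1)])) ->
  (forall t : nat, optimal_sol D (Sp t) (Sm t) (y t.+1) (b t.+1) (dd t.+1)) ->
  forall t : nat, (0 < t)%N ->
    D yst * (dst / dd t) <= dot yst (vmax N D (y t)) /\
    0 < D yst * (dst / dd t).
Proof.
move=> N_norm ND_dual _ N_sconv _ [yst0 margin_eq _ dst_gt0] init_ok_init Sp0 Sm0
  A_in update opt t t_gt0.
have Dyst_gt0 := dual_gt0 N_norm ND_dual yst0.
have m_gt0 : 0 < dst * D yst by rewrite mulr_gt0.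
have invariant k :
    [/\ Sp k !=set0, Sm k !=set0 & separates yst bst (dst * D yst) (Sp k) (Sm k)].
  elim: k => [|k [neP neM sep]]; first by rewrite Sp0 Sm0; exact: init_separated Dyst_gt0 margin_eq init_ok_init.
  have [dd_gt0 v_ge] := optimal_vmax_ge N_norm ND_dual N_sconv m_gt0 neP neM sep (opt k).
  have proxy_sep : dst * D yst <= signed_margin yst bst (lab (A k.+1))
      (proxy N D c lab (A k.+1) (y k.+1) (b k.+1)).
    have v_ge0 : 0 <= dot yst (vmax N D (y k.+1)).
      by apply: le_trans v_ge; rewrite divr_ge0 ?ltW.
    apply: le_trans (signed_margin_proxy_ge lab c bst (A k.+1) (b k.+1) v_ge0).
    by apply: set_margin_signed Dyst_gt0 _ (A_in k.+1 isT); rewrite margin_eq.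
  have [Sp_eq Sm_eq] := update k; split.
  - by case: neP => x Spx; exists x; rewrite Sp_eq; case: ifP => _; [left|].
  - by case: neM => x Smx; exists x; rewrite Sm_eq; case: ifP => _; [|left].
  - by rewrite Sp_eq Sm_eq; apply: separates_add.
case: t t_gt0 => // k _; have [neP neM sep] := invariant k.
have [dd_gt0 v_ge] := optimal_vmax_ge N_norm ND_dual N_sconv m_gt0 neP neM sep (opt k).
by rewrite mulrA [D yst * dst]mulrC divr_gt0.
Qed.
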